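(* Let $r>0$ be the maximum range, and let $d_s$ and $\theta_s$ be parameters with $0\le d_s\le 2r$ and $0^\circ\le\theta_s\le 60^\circ$. Let $Q_i,Q_j,Q_k\in\mathbb{R}^2$ be the locations of a triplet of reference nodes (with parameters $d_s,\theta_s$), forming the triangle $q=\triangle Q_iQ_jQ_k$. Let $U\in\mathbb{R}^2$, $U\notin\{Q_i,Q_j,Q_k\}$, be the position of a user terminal that has LoS conditions to all three nodes, in particular $\|UQ_i\|,\|UQ_j\|,\|UQ_k\|\le r$. Let $\theta_E$ be the effective visibility angle of $U$. Then $$|90^\circ-\theta_E|\le 90^\circ-\theta_s\quad\text{if } U \text{ lies inside } q,$$ and $$|90^\circ-\theta_E|\le 90^\circ-2\arctan\!\Big(\frac{d_s}{2r}\tan\big(\tfrac{\theta_s}{2}\big)\Big)\quad\text{if } U \text{ lies outside } q.$$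
   Context: A triplet of reference nodes with minimum separation distance $d_s$ and minimum separation angle $\theta_s$ is a set of three points $Q_i,Q_j,Q_k$ that are the vertices of a triangle $q$ such that all three side lengths of $q$ are at least $d_s$ and all three interior angles $\hat Q_i,\hat Q_j,\hat Q_k$ of $q$ are at least $\theta_s$. For a point $U$, the (non-reflex) visibility angles are $\theta_{ij}=\angle Q_iUQ_j$, $\theta_{ik}=\angle Q_iUQ_k$, $\theta_{jk}=\angle Q_jUQ_k$, each taken in $[0^\circ,180^\circ]$. The effective visibility angle (EVA) $\theta_E$ of $U$ is the one among $\theta_{ij},\theta_{ik},\theta_{jk}$ that is closest to $90^\circ$, i.e. minimizes $|90^\circ-\theta|$. *)

(* concrete reals R, angles in radians (90 deg = PI/2). *)
From Stdlib Require Import Reals Lra.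
Open Scope R_scope.

Definition pt := (R * R)%type.

Definition dot (a b : pt) : R := fst a * fst b + snd a * snd b.
Definition sub (a b : pt) : pt := (fst a - fst b, snd a - snd b).
Definition norm (a : pt) : R := sqrt (dot a a).
Definition edist (A B : pt) : R := norm (sub B A).

(* Non-reflex angle  /_ A O B  in [0, PI] (for A <> O, B <> O). *)
Definition angle (A O B : pt) : R :=
  acos (dot (sub A O) (sub B O) / (norm (sub A O) * norm (sub B O))).

Definition noncollinear (A B C : pt) : Prop :=
  (fst B - fst A) * (snd C - snd A) - (snd B - snd A) * (fst C - fst A) <> 0.

(* Triplet of reference nodes with min separation distance ds and
   min separation angle ths. *)
Definition triplet (ds ths : R) (Qi Qj Qk : pt) : Prop :=
  noncollinear Qi Qj Qk /\
  edist Qi Qj >= ds /\ edist Qi Qk >= ds /\ edist Qj Qk >= ds /\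
  angle Qj Qi Qk >= ths /\ angle Qi Qj Qk >= ths /\ angle Qi Qk Qj >= ths.

Definition in_triangle (U Qi Qj Qk : pt) : Prop :=
  exists a b c : R, 0 <= a /\ 0 <= b /\ 0 <= c /\ a + b + c = 1 /\
    fst U = a * fst Qi + b * fst Qj + c * fst Qk /\
    snd U = a * snd Qi + b * snd Qj + c * snd Qk.

Definition is_EVA (U Qi Qj Qk : pt) (thE : R) : Prop :=
  let tij := angle Qi U Qj in
  let tik := angle Qi U Qk in
  let tjk := angle Qj U Qk in
  (thE = tij \/ thE = tik \/ thE = tjk) /\
  Rabs (PI/2 - thE) <= Rabs (PI/2 - tij) /\
  Rabs (PI/2 - thE) <= Rabs (PI/2 - tik) /\
  Rabs (PI/2 - thE) <= Rabs (PI/2 - tjk).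

(* Write [a], [b], [c] for the nodes seen from the user [U].  If [U] lies in the
   triangle, each visibility angle is at least the opposite vertex angle, hence at
   least [ths]; as three angles above [PI - ths >= 2 PI / 3] cannot surround [U], some
   visibility angle lies in [[ths, PI - ths]].

   In general put [k = ds / (2 r)] and [ph = 2 atan (k tan (ths / 2))], and call a
   visibility angle small if it is below [ph] and large if it exceeds [PI - ph].  Two
   small and one large, or three large angles, are impossible around [U]; one small and
   two large angles force an angle of the triangle below [ths].  If all three are small,
   one node lies in the sector spanned by the other two, which bounds the base angles
   of the triangle [U b c] by [PI - ths]; with [|bc| >= ds] and [|Ub|, |Uc| <= r] the law
   of sines then makes the apex angle at least [ph]. *)

From Stdlib Require Import Reals Lra Psatz.
Open Scope R_scope.

Definition cross (a b : pt) : R := fst a * snd b - snd a * fst b.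
Definition opp (a : pt) : pt := (- fst a, - snd a).
Definition cosv (u v : pt) : R := dot u v / (norm u * norm v).

Lemma dot_comm u v : dot u v = dot v u.
Proof. unfold dot; ring. Qed.

Lemma dot_self_ge0 v : 0 <= dot v v.
Proof. unfold dot; nra. Qed.

Lemma norm_ge0 v : 0 <= norm v.
Proof. apply sqrt_pos. Qed.

Lemma norm_mul_self v : norm v * norm v = dot v v.
Proof. apply sqrt_sqrt, dot_self_ge0. Qed.

Lemma lagrange_identity u v : dot u u * dot v v = dot u v * dot u v + cross u v * cross u v.
Proof. unfold dot, cross; ring. Qed.

Lemma dot_sqr_le u v : dot u v * dot u v <= (norm u * norm v) * (norm u * norm v).
Proof.
  pose proof (lagrange_identity u v) as L. rewrite <- !norm_mul_self in L.
  pose proof (Rle_0_sqr (cross u v)). unfold Rsqr in *. nra.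
Qed.

Lemma dot_le_norm_mul u v : dot u v <= norm u * norm v.
Proof.
  pose proof (dot_sqr_le u v).
  pose proof (Rmult_le_pos _ _ (norm_ge0 u) (norm_ge0 v)). nra.
Qed.

Lemma dot_ge_opp_norm_mul u v : - (norm u * norm v) <= dot u v.
Proof.
  pose proof (dot_sqr_le u v).
  pose proof (Rmult_le_pos _ _ (norm_ge0 u) (norm_ge0 v)). nra.
Qed.

Lemma norm_gt0 v : v <> (0, 0) -> 0 < norm v.
Proof.
  destruct v as [x y]; intro Hv.
  apply sqrt_lt_R0; unfold dot; simpl.
  destruct (Req_dec x 0), (Req_dec y 0); subst; [congruence | nra ..].
Qed.

Lemma sub_neq0 A B : A <> B -> sub A B <> (0, 0).
Proof.
  destruct A as [a1 a2], B as [b1 b2]; unfold sub; simpl; intros H E.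
  injection E; intros; apply H; f_equal; lra.
Qed.

Lemma norm_sub_gt0 A B : A <> B -> 0 < norm (sub A B).
Proof. intro; apply norm_gt0, sub_neq0; assumption. Qed.

Lemma noncollinear_neq A B C : noncollinear A B C -> A <> B /\ A <> C /\ B <> C.
Proof. unfold noncollinear; intros H; repeat split; intro E; apply H; subst; ring. Qed.

Lemma sub_neq X Y U : X <> Y -> sub X U <> sub Y U.
Proof.
  destruct X, Y; unfold sub; simpl; intros H E; injection E; intros; apply H; f_equal; lra.
Qed.

Lemma norm_opp v : norm (opp v) = norm v.
Proof. unfold norm, opp, dot; simpl; f_equal; ring. Qed.

Lemma norm_sub_sym u v : norm (sub u v) = norm (sub v u).
Proof. unfold norm, sub, dot; simpl; f_equal; ring. Qed.

Lemma sub_sub_shift X Y U : sub (sub X U) (sub Y U) = sub X Y.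
Proof. unfold sub; simpl; f_equal; ring. Qed.

Lemma dot_eq_cosv u v : 0 < norm u -> 0 < norm v -> dot u v = cosv u v * (norm u * norm v).
Proof. intros; unfold cosv; field; lra. Qed.

Lemma cosv_bounds u v : 0 < norm u -> 0 < norm v -> -1 <= cosv u v <= 1.
Proof.
  intros Hu Hv. pose proof (dot_le_norm_mul u v). pose proof (dot_ge_opp_norm_mul u v).
  rewrite (dot_eq_cosv u v Hu Hv) in *.
  assert (0 < norm u * norm v) by nra. split; nra.
Qed.

(** * Angular closeness *)

(* [near c u v]: the angle between [u] and [v] is below [acos c];
   [far c u v]: it exceeds [PI - acos c]. *)
Definition near (c : R) (u v : pt) : Prop := c * norm u * norm v < dot u v.
Definition far (c : R) (u v : pt) : Prop := dot u v < - c * norm u * norm v.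

Definition comb (l : R) (u : pt) (m : R) (v : pt) : pt :=
  (l * fst u + m * fst v, l * snd u + m * snd v).

Ltac pt_ring := unfold comb, sub, opp; simpl; f_equal; ring.

Lemma near_sym c u v : near c u v -> near c v u.
Proof. unfold near; rewrite dot_comm; lra. Qed.

Lemma far_sym c u v : far c u v -> far c v u.
Proof. unfold far; rewrite dot_comm; lra. Qed.

Lemma dot_opp_l u v : dot (opp u) v = - dot u v.
Proof. unfold dot, opp; simpl; ring. Qed.

Lemma near_opp_of_far c u v : far c u v -> near c (opp u) v.
Proof. unfold far, near; rewrite dot_opp_l, norm_opp; lra. Qed.

Lemma near_self c v : c < 1 -> 0 < norm v -> near c v v.
Proof.
  unfold near; intros; rewrite <- norm_mul_self.
  assert (0 < norm v * norm v) by nra. nra.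
Qed.

Lemma near_self_weak c v : c <= 1 -> c * norm v * norm v <= dot v v.
Proof. intros; rewrite <- norm_mul_self; pose proof (norm_ge0 v); nra. Qed.

Lemma near_weaken K c u v : 0 <= K <= c -> near c u v -> near K u v.
Proof.
  unfold near; intros.
  pose proof (Rmult_le_pos _ _ (norm_ge0 u) (norm_ge0 v)). nra.
Qed.

Lemma far_weaken K c u v : 0 <= K <= c -> far c u v -> far K u v.
Proof.
  unfold far; intros.
  pose proof (Rmult_le_pos _ _ (norm_ge0 u) (norm_ge0 v)). nra.
Qed.

Lemma near_iff_cosv c u v : 0 < norm u -> 0 < norm v -> near c u v <-> c < cosv u v.
Proof.
  intros Hu Hv; unfold near; rewrite (dot_eq_cosv u v Hu Hv).
  assert (0 < norm u * norm v) by nra. split; intro; nra.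
Qed.

Lemma far_iff_cosv c u v : 0 < norm u -> 0 < norm v -> far c u v <-> cosv u v < - c.
Proof.
  intros Hu Hv; unfold far; rewrite (dot_eq_cosv u v Hu Hv).
  assert (0 < norm u * norm v) by nra. split; intro; nra.
Qed.

Lemma near_or_far c u v : 0 < norm u -> 0 < norm v ->
  c < Rabs (cosv u v) -> near c u v \/ far c u v.
Proof.
  intros Hu Hv H; rewrite (near_iff_cosv c u v Hu Hv), (far_iff_cosv c u v Hu Hv).
  unfold Rabs in H; destruct (Rcase_abs (cosv u v)); lra.
Qed.

Lemma dot_comb_l l u m v w : dot (comb l u m v) w = l * dot u w + m * dot v w.
Proof. unfold dot, comb; simpl; ring. Qed.

Lemma norm_comb_le l u m v : 0 <= l -> 0 <= m ->
  norm (comb l u m v) <= l * norm u + m * norm v.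
Proof.
  intros Hl Hm.
  assert (Hsq : dot (comb l u m v) (comb l u m v)
                = l * l * dot u u + m * m * dot v v + 2 * l * m * dot u v)
    by (unfold dot, comb; simpl; ring).
  pose proof (dot_le_norm_mul u v).
  pose proof (norm_mul_self u). pose proof (norm_mul_self v).
  pose proof (norm_mul_self (comb l u m v)).
  pose proof (norm_ge0 u). pose proof (norm_ge0 v). pose proof (norm_ge0 (comb l u m v)).
  assert (0 <= l * m) by nra.
  assert (0 <= l * norm u + m * norm v) by nra.
  nra.
Qed.

(* The cone [{x | K |x| |w| <= x . w}] is convex for [K >= 0]. *)
Lemma near_comb K l u m v w : 0 <= K -> 0 <= l -> 0 <= m ->
  K * norm u * norm w <= dot u w -> K * norm v * norm w <= dot v w ->
  (0 < l /\ near K u w) \/ (0 < m /\ near K v w) ->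
  near K (comb l u m v) w.
Proof.
  unfold near; intros HK Hl Hm Hu Hv Hs.
  rewrite dot_comb_l.
  pose proof (norm_comb_le l u m v Hl Hm). pose proof (norm_ge0 w).
  assert (K * norm (comb l u m v) * norm w <= K * (l * norm u + m * norm v) * norm w).
  { apply Rmult_le_compat_r, Rmult_le_compat_l; assumption. }
  destruct Hs as [[? ?] | [? ?]]; nra.
Qed.

(** * Three directions around a point *)

Lemma near_apex_of_far_far K a b c : 0 <= K <= 1 ->
  near K a b -> far K a c -> far K b c -> near K (sub a c) (sub b c).
Proof.
  intros HK Hab Hac Hbc.
  assert (Ea : sub a c = comb 1 a 1 (opp c)) by pt_ring.
  assert (Eb : sub b c = comb 1 b 1 (opp c)) by pt_ring.
  assert (Hcb : near K (opp c) b) by (apply near_opp_of_far, far_sym, Hbc).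
  assert (Hca : near K (opp c) a) by (apply near_opp_of_far, far_sym, Hac).
  assert (H1 : near K (sub a c) b).
  { rewrite Ea; apply near_comb; unfold near in *; lra. }
  assert (H2 : near K (sub a c) (opp c)).
  { rewrite Ea; apply near_comb; try apply near_self_weak;
      apply near_sym in Hca; unfold near in *; lra. }
  apply near_sym; rewrite Eb; apply near_comb;
    apply near_sym in H1; apply near_sym in H2; unfold near in *; lra.
Qed.

(* The identity [Id] is the cosine addition formula: the angle between [a] and [c] is
   at most the sum of the other two, below [2 acos k <= PI - acos k]. *)
Lemma not_near_near_far k a b c : 1/2 <= k <= 1 ->
  0 < norm a -> 0 < norm b -> 0 < norm c ->
  near k a b -> near k b c -> far k a c -> False.
Proof.
  unfold near, far; intros Hk Ha Hb Hc H1 H2 H3.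
  assert (Id : dot b b * dot a c = dot a b * dot c b + cross a b * cross c b)
    by (unfold dot, cross; ring).
  pose proof (lagrange_identity a b) as La. pose proof (lagrange_identity c b) as Lc.
  rewrite <- !(norm_mul_self b) in La, Lc, Id.
  rewrite <- (norm_mul_self a) in La. rewrite <- (norm_mul_self c) in Lc.
  rewrite (dot_comm c b) in Lc, Id.
  set (na := norm a) in *. set (nb := norm b) in *. set (nc := norm c) in *.
  set (X := cross a b) in *. set (Y := cross c b) in *.
  set (p := dot a b) in *. set (q := dot b c) in *. set (s := dot a c) in *.
  assert (0 <= k * na * nb) by (repeat apply Rmult_le_pos; lra).
  assert (0 <= k * nb * nc) by (repeat apply Rmult_le_pos; lra).
  assert (HX : X * X < (1 - k * k) * (na * nb) * (na * nb)) by nra.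
  assert (HY : Y * Y < (1 - k * k) * (nb * nc) * (nb * nc)) by nra.
  set (P := (1 - k * k) * (na * nb) * (nb * nc)).
  assert (0 <= P) by (unfold P; nra).
  assert (HXY : (X * Y) * (X * Y) < P * P).
  { unfold P. assert (0 <= X * X) by nra. assert (0 <= Y * Y) by nra. nra. }
  assert (- P < X * Y) by nra.
  assert (k * k * (na * nb) * (nb * nc) < p * q).
  { assert (0 <= k * (na * nb)) by nra. assert (0 <= k * (nb * nc)) by nra. nra. }
  assert ((2 * k * k - 1) * na * nb * nb * nc < nb * nb * s) by (unfold P in *; nra).
  assert (- k * (na * nb * nb * nc) <= (2 * k * k - 1) * (na * nb * nb * nc)).
  { assert (0 < na * nb * nb * nc) by (repeat apply Rmult_lt_0_compat; auto).
    assert (0 <= ((2 * k - 1) * (k + 1)) * (na * nb * nb * nc)) by (apply Rmult_le_pos; nra).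
    nra. }
  assert (nb * nb * s < - k * na * nb * nb * nc) by (assert (0 < nb * nb) by nra; nra).
  nra.
Qed.

(* Three pairwise angles above [2 PI / 3] cannot fit around a point:
   the vector [|b| |c| a + |a| |c| b + |a| |b| c] would have negative squared norm. *)
Lemma not_all_far a b c : 0 < norm a -> 0 < norm b -> 0 < norm c ->
  far (1/2) a b -> far (1/2) b c -> far (1/2) a c -> False.
Proof.
  unfold far; intros Ha Hb Hc H1 H2 H3.
  set (w := (norm b * norm c * fst a + norm a * norm c * fst b + norm a * norm b * fst c,
             norm b * norm c * snd a + norm a * norm c * snd b + norm a * norm b * snd c)).
  pose proof (dot_self_ge0 w).
  assert (E : dot w w = (norm b * norm c) ^ 2 * dot a a + (norm a * norm c) ^ 2 * dot b b
      + (norm a * norm b) ^ 2 * dot c c + 2 * (norm a * norm b * norm c) * (norm c * dot a b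
      + norm a * dot b c + norm b * dot a c)) by (unfold w, dot; simpl; ring).
  rewrite <- !norm_mul_self in E.
  assert (0 < norm a * norm b * norm c) by (repeat apply Rmult_lt_0_compat; auto).
  assert (norm c * dot a b + norm a * dot b c + norm b * dot a c
          < - (3/2) * (norm a * norm b * norm c)).
  { assert (norm c * dot a b < norm c * (- (1/2) * norm a * norm b)) by (apply Rmult_lt_compat_l; auto).
    assert (norm a * dot b c < norm a * (- (1/2) * norm b * norm c)) by (apply Rmult_lt_compat_l; auto).
    assert (norm b * dot a c < norm b * (- (1/2) * norm a * norm c)) by (apply Rmult_lt_compat_l; auto).
    nra. }
  nra.
Qed.

(* Points are vectors from [U], so [opp b] points from [b] back to [U]. *)
Lemma near_of_far_opposite_angle K b c : 0 <= K <= 1 ->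
  far K (opp b) (sub c b) -> near K (opp c) (sub b c).
Proof.
  unfold far; intros HK Hb.
  replace (opp c) with (comb 1 (opp b) 1 (sub b c)) by pt_ring.
  assert (Hn : near K (opp b) (sub b c)).
  { unfold near; rewrite (norm_sub_sym b c).
    replace (dot (opp b) (sub b c)) with (- dot (opp b) (sub c b))
      by (unfold dot, opp, sub; simpl; ring).
    lra. }
  apply near_comb; try lra.
  - unfold near in Hn; lra.
  - apply near_self_weak; lra.
  - left; split; [lra | exact Hn].
Qed.

Section BetweenBase.

Variables (K l m : R) (a b c : pt).
Hypotheses (HK : 0 <= K < 1) (Hl : 0 <= l) (Hm : 0 <= m) (Ea : a = comb l b m c).

Lemma near_beyond_base :
  1 <= l + m -> a <> b -> 0 < norm (sub c b) ->
  far K (opp b) (sub c b) -> near K (sub a b) (sub c b).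
Proof.
  intros Hlm Hab Hcb Hfar.
  replace (sub a b) with (comb (l + m - 1) b m (sub c b)) by (subst a; pt_ring).
  assert (Hb : near K b (sub c b)).
  { unfold far, near in *; rewrite dot_opp_l, norm_opp in Hfar; lra. }
  apply near_comb; try lra.
  - unfold near in Hb; lra.
  - apply near_self_weak; lra.
  - destruct (Rlt_or_le 0 (l + m - 1)); [left; split; [lra | exact Hb] |].
    destruct (Rlt_or_le 0 m); [right; split; [lra | apply near_self; lra] |].
    exfalso; apply Hab; subst a; replace l with 1 by lra; replace m with 0 by lra.
    destruct b; unfold comb; simpl; f_equal; ring.
Qed.

Lemma near_within_base :
  l + m <= 1 -> a <> c -> 0 < norm (sub b c) ->
  near K (opp c) (sub b c) -> near K (sub a c) (sub b c).
Proof.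
  intros Hlm Hac Hbc Hc.
  replace (sub a c) with (comb (1 - l - m) (opp c) l (sub b c)) by (subst a; pt_ring).
  apply near_comb; try lra.
  - unfold near in Hc; lra.
  - apply near_self_weak; lra.
  - destruct (Rlt_or_le 0 (1 - l - m)); [left; split; [lra | exact Hc] |].
    destruct (Rlt_or_le 0 l); [right; split; [lra | apply near_self; lra] |].
    exfalso; apply Hac; subst a; replace l with 0 by lra; replace m with 1 by lra.
    destruct c; unfold comb; simpl; f_equal; ring.
Qed.

Lemma not_far_base_angle :
  a <> b -> a <> c -> b <> c ->
  ~ near K (sub a b) (sub c b) -> ~ near K (sub a c) (sub b c) ->
  ~ far K (opp b) (sub c b).
Proof.
  intros Hab Hac Hbc Nb Nc Hfar.
  destruct (Rle_or_lt 1 (l + m)).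
  - apply Nb, near_beyond_base; auto using norm_sub_gt0.
  - apply Nc, near_within_base; auto using norm_sub_gt0; try lra.
    apply near_of_far_opposite_angle; [lra | exact Hfar].
Qed.

End BetweenBase.

(* Triangle [U b c] with [p = |Ub| <= q = |Uc| <= r], base [l = |bc| >= 2 k r] and
   [D = b . c]: a base angle at most [PI - acos K] at [b] bounds the apex cosine. *)
Lemma apex_dot_le p q l D r k K c :
  0 < p -> 0 < q -> 0 < l -> p <= q <= r -> 2 * k * r <= l -> 0 <= k ->
  l * l = p * p + q * q - 2 * D -> - K * p * l <= p * p - D ->
  0 <= c -> 0 <= K <= 1 -> 1 - 2 * k * k <= c -> 1 - c * c <= 4 * k * k * (1 - K * K) ->
  D <= c * p * q.
Proof.
  intros Hp Hq Hl [Hpq Hqr] Hlr Hk El HB Hc HK N1 N2.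
  assert (2 * k * q <= l) by nra.
  assert (0 <= 2 * k * q) by nra.
  assert (Hl2 : 4 * k * k * q * q <= l * l) by nra.
  destruct (Rlt_or_le D (p * p)) as [Hi | Hi].
  - assert (Id : 2 * q * (p * q - D) - l * l * p = (q - p) * (p * q + p * p - 2 * D))
      by (rewrite El; ring).
    assert (0 <= (q - p) * (p * q + p * p - 2 * D)) by (apply Rmult_le_pos; nra).
    assert (2 * k * k * p * q <= p * q - D) by nra.
    assert (0 <= (c - (1 - 2 * k * k)) * (p * q)) by (apply Rmult_le_pos; nra).
    nra.
  - apply Rnot_lt_le; intro HD.
    assert ((D - p * p) * (D - p * p) <= K * K * p * p * l * l) by nra.
    assert (Id : p * p * q * q - D * D = p * p * (l * l) - (p * p - D) * (p * p - D))
      by (rewrite El; ring).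
    assert (p * p * q * q - D * D >= (1 - K * K) * p * p * (4 * k * k * q * q)).
    { assert (0 <= (1 - K * K) * p * p) by (repeat apply Rmult_le_pos; nra).
      assert (0 <= ((1 - K * K) * p * p) * (l * l - 4 * k * k * q * q))
        by (apply Rmult_le_pos; nra).
      nra. }
    assert (D * D > c * c * (p * q) * (p * q)).
    { assert (0 <= c * p * q) by (apply Rmult_le_pos; nra). nra. }
    assert (0 < p * q * (p * q)) by nra.
    nra.
Qed.

Definition in_cone (a b c : pt) : Prop :=
  exists l m, 0 <= l /\ 0 <= m /\ a = comb l b m c.

Lemma in_cone_swap a b c : in_cone a b c -> in_cone a c b.
Proof.
  intros (l & m & Hl & Hm & E); exists m, l; repeat split; auto.
  subst a; pt_ring.
Qed.

Lemma not_near_of_in_cone K k r ds cp a b c :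
  0 <= K < 1 -> 0 <= k -> ds = 2 * k * r -> 0 <= cp ->
  1 - 2 * k * k <= cp -> 1 - cp * cp <= 4 * k * k * (1 - K * K) ->
  in_cone a b c -> 0 < norm b -> 0 < norm c -> a <> b -> a <> c -> b <> c ->
  ~ near K (sub a b) (sub c b) -> ~ near K (sub a c) (sub b c) ->
  norm b <= r -> norm c <= r -> ds <= norm (sub c b) ->
  ~ near cp b c.
Proof.
  intros HK Hk Eds Hcp N1 N2 Hcone Hb Hc Hab Hac Hbc Nb Nc Hbr Hcr Hds.
  pose proof Hcone as (l & m & Hl & Hm & Ea).
  destruct (in_cone_swap _ _ _ Hcone) as (l' & m' & Hl' & Hm' & Ea').
  assert (Fb := not_far_base_angle K l m a b c HK Hl Hm Ea Hab Hac Hbc Nb Nc).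
  assert (Fc := not_far_base_angle K l' m' a c b HK Hl' Hm' Ea' Hac Hab
                  (not_eq_sym Hbc) Nc Nb).
  unfold far, near in *; apply Rle_not_lt.
  assert (E1 : dot (opp b) (sub c b) = norm b * norm b - dot b c)
    by (rewrite norm_mul_self; unfold dot, opp, sub; simpl; ring).
  assert (E2 : dot (opp c) (sub b c) = norm c * norm c - dot b c)
    by (rewrite norm_mul_self; unfold dot, opp, sub; simpl; ring).
  assert (El : norm (sub c b) * norm (sub c b)
               = norm b * norm b + norm c * norm c - 2 * dot b c)
    by (rewrite !norm_mul_self; unfold dot, sub; simpl; ring).
  assert (Hcb : 0 < norm (sub c b)) by (apply norm_sub_gt0; auto).
  rewrite norm_opp in Fb, Fc. rewrite (norm_sub_sym b c) in Fc.
  destruct (Rle_or_lt (norm b) (norm c)).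
  - apply (apex_dot_le (norm b) (norm c) (norm (sub c b)) (dot b c) r k K cp); lra.
  - rewrite (Rmult_assoc cp), (Rmult_comm (norm b)), <- Rmult_assoc.
    apply (apex_dot_le (norm c) (norm b) (norm (sub c b)) (dot b c) r k K cp); lra.
Qed.

Lemma in_cone_of_cross a b c :
  cross b c <> 0 -> cross c a * cross b c <= 0 -> cross a b * cross b c <= 0 ->
  in_cone a b c.
Proof.
  intros H0 H1 H2.
  assert (0 < cross b c * cross b c) by (destruct (Rlt_or_le 0 (cross b c)); nra).
  exists (- cross c a / cross b c), (- cross a b / cross b c).
  assert (Hpos : forall x, x * cross b c <= 0 -> 0 <= - x / cross b c).
  { intros x Hx.
    replace (- x / cross b c) with (- (x * cross b c) / (cross b c * cross b c))
      by (field; auto).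
    apply Rmult_le_pos; [lra | left; apply Rinv_0_lt_compat; auto]. }
  repeat split; auto.
  unfold comb, cross in *; destruct a; simpl; f_equal; field; auto.
Qed.

(* Dotting [cross b c * a + cross c a * b + cross a b * c = 0] with [a]. *)
Lemma cross_not_all_nonneg a b c :
  0 < dot a b -> 0 < dot b c -> 0 < dot a c -> 0 < dot a a ->
  cross a b + cross b c + cross c a <> 0 ->
  ~ (0 <= cross a b /\ 0 <= cross b c /\ 0 <= cross c a).
Proof.
  intros H1 H2 H3 H4 HN (A & B & C).
  assert (cross b c * dot a a + cross c a * dot a b + cross a b * dot a c = 0)
    by (unfold cross, dot; ring).
  assert (cross b c = 0) by nra. assert (cross c a = 0) by nra.
  assert (cross a b = 0) by nra. lra.
Qed.

Lemma odd_sign_out x y z :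
  ~ (0 <= x /\ 0 <= y /\ 0 <= z) -> ~ (x <= 0 /\ y <= 0 /\ z <= 0) ->
  (x <> 0 /\ y * x <= 0 /\ z * x <= 0) \/ (y <> 0 /\ x * y <= 0 /\ z * y <= 0) \/
  (z <> 0 /\ x * z <= 0 /\ y * z <= 0).
Proof.
  intros Pos Neg.
  destruct (Rle_lt_dec 0 x), (Rle_lt_dec 0 y), (Rle_lt_dec 0 z).
  - exfalso; tauto.
  - right; right; split; [lra | split; nra].
  - right; left; split; [lra | split; nra].
  - left; split; [intro; apply Neg; lra | split; nra].
  - left; split; [lra | split; nra].
  - right; left; split; [intro; apply Neg; lra | split; nra].
  - right; right; split; [intro; apply Neg; lra | split; nra].
  - exfalso; apply Neg; lra.
Qed.

Lemma one_in_cone a b c :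
  0 < dot a b -> 0 < dot b c -> 0 < dot a c -> 0 < dot a a ->
  cross a b + cross b c + cross c a <> 0 ->
  in_cone a b c \/ in_cone b a c \/ in_cone c a b.
Proof.
  intros H1 H2 H3 H4 HN.
  assert (Hcross : forall u v, cross u v = - cross v u) by (intros; unfold cross; ring).
  assert (Neg : ~ (cross a b <= 0 /\ cross b c <= 0 /\ cross c a <= 0)).
  { intros (A & B & C); apply (cross_not_all_nonneg a c b);
      rewrite ?(dot_comm c b), ?(Hcross a c), ?(Hcross c b), ?(Hcross b a); auto; lra. }
  destruct (odd_sign_out _ _ _ (cross_not_all_nonneg a b c H1 H2 H3 H4 HN) Neg)
    as [(S1 & S2 & S3) | [(S1 & S2 & S3) | (S1 & S2 & S3)]].
  - right; right; apply in_cone_of_cross; auto.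
  - left; apply in_cone_of_cross; auto.
  - right; left; apply in_cone_of_cross; rewrite ?(Hcross a c), ?(Hcross c b), ?(Hcross b a);
      [lra | nra | nra].
Qed.

Section ThreeDirections.

Variables (K k r ds cp : R) (a b c : pt).
Hypotheses (HK : 1/2 <= K) (HKcp : K <= cp) (Hcp : cp <= 1)
  (Hk : 0 <= k) (Eds : ds = 2 * k * r)
  (N1 : 1 - 2 * k * k <= cp) (N2 : 1 - cp * cp <= 4 * k * k * (1 - K * K)).
Hypotheses (Ha : 0 < norm a) (Hb : 0 < norm b) (Hc : 0 < norm c)
  (Hab : a <> b) (Hac : a <> c) (Hbc : b <> c)
  (HN : cross a b + cross b c + cross c a <> 0).
Hypotheses (HA : ~ near K (sub b a) (sub c a)) (HB : ~ near K (sub a b) (sub c b))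
  (HC : ~ near K (sub a c) (sub b c)).
Hypotheses (Har : norm a <= r) (Hbr : norm b <= r) (Hcr : norm c <= r)
  (Dab : ds <= norm (sub b a)) (Dac : ds <= norm (sub c a)) (Dbc : ds <= norm (sub c b)).

Lemma not_all_near : cp < 1 -> near cp a b -> near cp b c -> near cp a c -> False.
Proof.
  intros Hcp1 H1 H2 H3.
  assert (HK1 : 0 <= K < 1) by lra.
  assert (Hpos : forall u v, near cp u v -> 0 < dot u v).
  { unfold near; intros u v Huv.
    pose proof (Rmult_le_pos _ _ (norm_ge0 u) (norm_ge0 v)). nra. }
  assert (Haa : 0 < dot a a) by (rewrite <- norm_mul_self; nra).
  destruct (one_in_cone a b c (Hpos _ _ H1) (Hpos _ _ H2) (Hpos _ _ H3) Haa HN)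
    as [Hcone | [Hcone | Hcone]].
  - apply (not_near_of_in_cone K k r ds cp a b c); auto; lra.
  - apply (not_near_of_in_cone K k r ds cp b a c); auto; try lra.
    intro Hn; apply HC, near_sym, Hn.
  - apply (not_near_of_in_cone K k r ds cp c a b); auto; try lra;
      intro Hn; [apply HA | apply HB]; apply near_sym, Hn.
Qed.

Lemma exists_pair_cos_le :
  Rabs (cosv a b) <= cp \/ Rabs (cosv a c) <= cp \/ Rabs (cosv b c) <= cp.
Proof.
  destruct (Rle_or_lt (Rabs (cosv a b)) cp) as [X | X]; [now left |].
  destruct (Rle_or_lt (Rabs (cosv a c)) cp) as [Y | Y]; [now right; left |].
  destruct (Rle_or_lt (Rabs (cosv b c)) cp) as [Z | Z]; [now right; right |].
  exfalso.
  assert (Hcp1 : cp < 1).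
  { pose proof (cosv_bounds a b Ha Hb). apply Rabs_le in H. lra. }
  assert (HK0 : 0 <= K <= cp) by lra. assert (Hh : 0 <= 1/2 <= cp) by lra.
  destruct (near_or_far cp a b Ha Hb X) as [Nab | Fab],
    (near_or_far cp a c Ha Hc Y) as [Nac | Fac],
    (near_or_far cp b c Hb Hc Z) as [Nbc | Fbc].
  - exact (not_all_near Hcp1 Nab Nbc Nac).
  - apply (not_near_near_far cp b a c); auto using near_sym; lra.
  - apply (not_near_near_far cp a b c); auto; lra.
  - apply HC, near_apex_of_far_far; [lra | ..]; eauto using near_weaken, far_weaken.
  - apply (not_near_near_far cp a c b); auto using near_sym, far_sym; lra.
  - apply HB, near_apex_of_far_far; [lra | ..];
      eauto using near_weaken, far_weaken, far_sym.
  - apply HA, near_apex_of_far_far; [lra | ..];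
      eauto using near_weaken, far_weaken, far_sym.
  - apply (not_all_far a b c); eauto using far_weaken.
Qed.

End ThreeDirections.

(** * Points inside the triangle *)

(* [DU / P] and [DA / Q] are the cosines of angles with cotangents [DU / (al N)] and
   [DA / N]; the cosine increases with the cotangent. *)
Lemma cos_le_of_cot_le P Q DU DA N al :
  0 < P -> 0 < Q -> P * P = DU * DU + (al * N) * (al * N) -> Q * Q = DA * DA + N * N ->
  N <> 0 -> 0 <= al -> DU <= al * DA -> DU * Q <= DA * P.
Proof.
  intros HP HQ EP EQ HN Hal H.
  assert (HN2 : 0 < N * N) by (destruct (Rlt_or_le 0 N); nra).
  assert (Ex : (DA * P) * (DA * P) - (DU * Q) * (DU * Q)
               = N * N * (al * DA * (al * DA) - DU * DU)).
  { replace ((DA * P) * (DA * P)) with (DA * DA * (P * P)) by ring.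
    replace ((DU * Q) * (DU * Q)) with (DU * DU * (Q * Q)) by ring.
    rewrite EP, EQ; ring. }
  destruct (Rlt_or_le 0 DU) as [H1 | H1].
  - assert (0 < al * DA) by lra.
    assert (0 < DA) by (destruct (Rlt_or_le 0 DA); nra).
    assert (0 <= N * N * (al * DA * (al * DA) - DU * DU)) by (apply Rmult_le_pos; nra).
    assert (0 < DA * P) by nra. assert (0 < DU * Q) by nra.
    nra.
  - destruct (Rle_or_lt 0 DA) as [H2 | H2]; [nra |].
    assert (al * DA <= 0) by nra.
    assert (al * DA * (al * DA) <= DU * DU) by nra.
    assert (N * N * (al * DA * (al * DA) - DU * DU) <= 0) by nra.
    assert (DA * P < 0) by nra. assert (DU * Q <= 0) by nra.
    nra.
Qed.

(* With barycentric weights [al, be, ga] of [U], [cross (B-U) (C-U) = al cross (B-A) (C-A)]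
   and [dot (B-U) (C-U) = al dot (B-A) (C-A) - V] with [V >= 0]: the cotangent of the
   angle at [U] is at most the one at [A]. *)
Lemma cosv_interior_le_vertex A B C U al be ga :
  0 <= al -> 0 <= be -> 0 <= ga -> al + be + ga = 1 ->
  fst U = al * fst A + be * fst B + ga * fst C ->
  snd U = al * snd A + be * snd B + ga * snd C ->
  cross (sub B A) (sub C A) <> 0 -> U <> B -> U <> C ->
  cosv (sub B U) (sub C U) <= cosv (sub B A) (sub C A).
Proof.
  intros Ha Hb Hg Hs E1 E2 HN HUB HUC.
  assert (Hal : al = 1 - be - ga) by lra.
  set (e := sub B U). set (f := sub C U). set (g := sub B A). set (h := sub C A).
  assert (HBA : B <> A) by (intro Eq; apply HN; subst g h B; unfold cross, sub; simpl; ring).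
  assert (HCA : C <> A) by (intro Eq; apply HN; subst g h C; unfold cross, sub; simpl; ring).
  assert (He : 0 < norm e) by (apply norm_sub_gt0; auto).
  assert (Hf : 0 < norm f) by (apply norm_sub_gt0; auto).
  assert (Hg' : 0 < norm g) by (apply norm_sub_gt0; auto).
  assert (Hh : 0 < norm h) by (apply norm_sub_gt0; auto).
  assert (EX : cross e f = al * cross g h).
  { unfold e, f, g, h, cross, sub; simpl; rewrite E1, E2, Hal; ring. }
  set (V := al * dot (sub A U) (sub A U) + be * dot (sub B U) (sub B U)
            + ga * dot (sub C U) (sub C U)).
  assert (EV : dot e f = al * dot g h - V).
  { unfold V, e, f, g, h, dot, sub; simpl; rewrite E1, E2, Hal; ring. }
  assert (HV : 0 <= V).
  { pose proof (dot_self_ge0 (sub A U)). pose proof (dot_self_ge0 (sub B U)).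
    pose proof (dot_self_ge0 (sub C U)). unfold V; nra. }
  pose proof (lagrange_identity e f) as L1. pose proof (lagrange_identity g h) as L2.
  rewrite <- (norm_mul_self e), <- (norm_mul_self f) in L1.
  rewrite <- (norm_mul_self g), <- (norm_mul_self h) in L2.
  assert (0 < norm e * norm f) by nra. assert (0 < norm g * norm h) by nra.
  assert (dot e f * (norm g * norm h) <= dot g h * (norm e * norm f)).
  { apply (cos_le_of_cot_le _ _ _ _ (cross g h) al); auto; try lra.
    rewrite <- EX; nra. }
  unfold cosv. apply (Rmult_le_reg_r (norm e * norm f * (norm g * norm h))); [nra |].
  field_simplify; lra.
Qed.

(** * The half-angle constants *)

Lemma cos_2atan t : cos (2 * atan t) = (1 - t * t) / (1 + t * t).
Proof.
  rewrite cos_2a_cos, cos_atan; unfold Rsqr.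
  assert (0 < 1 + t * t) by nra.
  pose proof (sqrt_sqrt (1 + t * t)) as S. pose proof (sqrt_lt_R0 (1 + t * t)).
  replace (2 * (1 / sqrt (1 + t * t)) * (1 / sqrt (1 + t * t)) - 1)
    with (2 / (sqrt (1 + t * t) * sqrt (1 + t * t)) - 1) by (field; lra).
  rewrite S by lra; field; lra.
Qed.

(* By [cos_2atan], the two fractions are [cos ths] for [T = tan (ths / 2)] and [cos ph]. *)
Lemma half_tan_bounds k T : 0 <= k <= 1 -> 0 <= T -> 1/2 <= (1 - T * T) / (1 + T * T) ->
  let K := (1 - T * T) / (1 + T * T) in
  let cp := (1 - k * T * (k * T)) / (1 + k * T * (k * T)) in
  K <= cp /\ cp <= 1 /\ 1 - 2 * k * k <= cp /\ 1 - cp * cp <= 4 * k * k * (1 - K * K).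
Proof.
  intros Hk HT HK K cp.
  assert (D1 : 0 < 1 + T * T) by nra.
  assert (D2 : 0 < 1 + k * T * (k * T)) by nra.
  assert (HT3 : T * T <= 1/3).
  { assert (E : (1 - T * T) / (1 + T * T) * (1 + T * T) = 1 - T * T) by (field; lra).
    apply (Rmult_le_compat_r (1 + T * T)) in HK; lra. }
  assert (0 <= (1 - k * k) * (T * T)) by (apply Rmult_le_pos; nra).
  assert (Htt : k * T * (k * T) <= T * T) by nra.
  unfold K, cp; repeat split.
  - apply (Rmult_le_reg_r ((1 + T * T) * (1 + k * T * (k * T)))); [nra |].
    field_simplify; lra.
  - apply (Rmult_le_reg_r (1 + k * T * (k * T))); [nra |].
    field_simplify; [nra | lra].
  - apply (Rmult_le_reg_r (1 + k * T * (k * T))); [nra |].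
    assert (0 <= k * k * (1 + k * k * T * T - T * T)) by (apply Rmult_le_pos; nra).
    field_simplify; [nra | lra].
  - apply (Rmult_le_reg_r ((1 + k * T * (k * T)) ^ 2 * (1 + T * T) ^ 2)); [nra |].
    assert ((1 + T * T) ^ 2 <= 4 * (1 + k * k * T * T) ^ 2) by nra.
    assert (0 <= k * k * T * T) by nra.
    field_simplify; [nra | lra | lra].
Qed.

Lemma half_angle_constants r ds ths : 0 < r -> 0 <= ds <= 2 * r -> 0 <= ths <= PI / 3 ->
  let k := ds / (2 * r) in
  let ph := 2 * atan (k * tan (ths / 2)) in
  1/2 <= cos ths /\ cos ths <= cos ph /\ cos ph <= 1 /\ 1 - 2 * k * k <= cos ph /\
  1 - cos ph * cos ph <= 4 * k * k * (1 - cos ths * cos ths) /\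
  0 <= k /\ ds = 2 * k * r /\ 0 <= ph <= PI.
Proof.
  intros Hr Hds Hth k ph. pose proof PI_RGT_0.
  assert (HK : 1/2 <= cos ths) by (rewrite <- cos_PI3; apply cos_decr_1; lra).
  assert (Hk : 0 <= k <= 1).
  { unfold k; split; [apply Rmult_le_pos; [lra | left; apply Rinv_0_lt_compat; lra] |].
    apply (Rmult_le_reg_r (2 * r)); [lra |]. field_simplify; lra. }
  set (T := tan (ths / 2)).
  assert (HT : 0 <= T).
  { assert (0 < cos (ths / 2)) by (apply cos_gt_0; lra).
    apply Rmult_le_pos; [apply sin_ge_0; lra | left; apply Rinv_0_lt_compat; auto]. }
  assert (EK : cos ths = (1 - T * T) / (1 + T * T)).
  { rewrite <- cos_2atan. unfold T; rewrite atan_tan by lra. f_equal; field. }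
  assert (Eph : cos ph = (1 - k * T * (k * T)) / (1 + k * T * (k * T)))
    by (unfold ph; rewrite cos_2atan; reflexivity).
  assert (Hat : 0 <= atan (k * T) < PI / 2).
  { pose proof (atan_bound (k * T)). split; [| lra].
    rewrite <- atan_0. destruct (Rle_lt_or_eq_dec 0 (k * T)) as [Hp | Hp];
      [nra | left; apply atan_increasing, Hp | rewrite <- Hp; lra]. }
  rewrite EK in HK |- *. rewrite Eph.
  destruct (half_tan_bounds k T Hk HT HK) as (B1 & B2 & B3 & B4).
  repeat split; try lra; [unfold k; field; lra | unfold ph; fold T; lra ..].
Qed.

(** * Visibility angles *)

Lemma cosv_le_of_angle_ge X O Y th : X <> O -> Y <> O -> 0 <= th <= PI ->
  angle X O Y >= th -> cosv (sub X O) (sub Y O) <= cos th.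
Proof.
  intros HX HY Hth H.
  pose proof (cosv_bounds _ _ (norm_sub_gt0 _ _ HX) (norm_sub_gt0 _ _ HY)) as B.
  rewrite <- (cos_acos _ B). pose proof (acos_bound (cosv (sub X O) (sub Y O))).
  apply cos_decr_1; unfold angle in H; fold (cosv (sub X O) (sub Y O)) in H; lra.
Qed.

Lemma not_near_of_angle_ge X O Y th : X <> O -> Y <> O -> 0 <= th <= PI ->
  angle X O Y >= th -> ~ near (cos th) (sub X O) (sub Y O).
Proof.
  intros HX HY Hth H.
  rewrite (near_iff_cosv _ _ _ (norm_sub_gt0 _ _ HX) (norm_sub_gt0 _ _ HY)).
  apply Rle_not_lt, cosv_le_of_angle_ge; assumption.
Qed.

Lemma abs_pi2_sub_acos_le x ph : -1 <= x <= 1 -> 0 <= ph <= PI -> Rabs x <= cos ph ->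
  Rabs (PI / 2 - acos x) <= PI / 2 - ph.
Proof.
  intros Hx Hph Habs. pose proof (acos_bound x).
  assert (- cos ph <= x <= cos ph) by (revert Habs; unfold Rabs; destruct (Rcase_abs x); lra).
  assert (ph <= acos x).
  { apply (cos_decr_0 (acos x) ph); try lra. rewrite cos_acos; lra. }
  assert (acos x <= PI - ph).
  { apply (cos_decr_0 (PI - ph) (acos x)); try lra.
    rewrite cos_acos, Rtrigo_facts.cos_pi_minus; lra. }
  apply Rabs_le; lra.
Qed.

Lemma eva_le_of_pair_cos_le U Qi Qj Qk thE ph :
  is_EVA U Qi Qj Qk thE -> U <> Qi -> U <> Qj -> U <> Qk -> 0 <= ph <= PI ->
  Rabs (cosv (sub Qi U) (sub Qj U)) <= cos ph \/ Rabs (cosv (sub Qi U) (sub Qk U)) <= cos ph \/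
  Rabs (cosv (sub Qj U) (sub Qk U)) <= cos ph ->
  Rabs (PI / 2 - thE) <= PI / 2 - ph.
Proof.
  intros (_ & Eij & Eik & Ejk) Hi Hj Hk Hph Hpair.
  assert (Hn : forall Q, U <> Q -> 0 < norm (sub Q U)) by (intros; apply norm_sub_gt0; auto).
  destruct Hpair as [H | [H | H]]; eapply Rle_trans;
    [exact Eij | | exact Eik | | exact Ejk |];
    apply abs_pi2_sub_acos_le; auto; apply cosv_bounds; auto.
Qed.

Lemma inside_pair_abs_cos_le ds ths Qi Qj Qk U : 0 <= ths <= PI / 3 ->
  triplet ds ths Qi Qj Qk -> U <> Qi -> U <> Qj -> U <> Qk -> in_triangle U Qi Qj Qk ->
  Rabs (cosv (sub Qi U) (sub Qj U)) <= cos ths \/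
  Rabs (cosv (sub Qi U) (sub Qk U)) <= cos ths \/
  Rabs (cosv (sub Qj U) (sub Qk U)) <= cos ths.
Proof.
  intros Hth (HNC & _ & _ & _ & AngI & AngJ & AngK) Hi Hj Hk
    (al & be & ga & Ha & Hb & Hg & Hs & E1 & E2).
  pose proof PI_RGT_0.
  assert (HK : 1/2 <= cos ths) by (rewrite <- cos_PI3; apply cos_decr_1; lra).
  assert (Hth' : 0 <= ths <= PI) by lra.
  destruct (noncollinear_neq _ _ _ HNC) as (Nij & Nik & Njk).
  unfold noncollinear in HNC.
  assert (Pbc : cosv (sub Qj U) (sub Qk U) <= cos ths).
  { eapply Rle_trans; [apply (cosv_interior_le_vertex Qi Qj Qk U al be ga) |
      apply cosv_le_of_angle_ge]; auto. }
  assert (Pac : cosv (sub Qi U) (sub Qk U) <= cos ths).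
  { eapply Rle_trans; [apply (cosv_interior_le_vertex Qj Qi Qk U be al ga) |
      apply cosv_le_of_angle_ge]; auto; try lra.
    unfold cross, sub; simpl; intro; apply HNC; lra. }
  assert (Pab : cosv (sub Qi U) (sub Qj U) <= cos ths).
  { eapply Rle_trans; [apply (cosv_interior_le_vertex Qk Qi Qj U ga al be) |
      apply cosv_le_of_angle_ge]; auto; try lra.
    unfold cross, sub; simpl; intro; apply HNC; lra. }
  assert (Hn : forall Q, U <> Q -> 0 < norm (sub Q U)) by (intros; apply norm_sub_gt0; auto).
  destruct (Rle_or_lt (- cos ths) (cosv (sub Qi U) (sub Qj U))).
  { left; apply Rabs_le; lra. }
  destruct (Rle_or_lt (- cos ths) (cosv (sub Qi U) (sub Qk U))).
  { right; left; apply Rabs_le; lra. }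
  destruct (Rle_or_lt (- cos ths) (cosv (sub Qj U) (sub Qk U))).
  { right; right; apply Rabs_le; lra. }
  exfalso; apply (not_all_far (sub Qi U) (sub Qj U) (sub Qk U)); auto;
    rewrite far_iff_cosv; auto; lra.
Qed.

Lemma pair_abs_cos_le_half_angle r ds ths Qi Qj Qk U :
  0 < r -> 0 <= ds <= 2 * r -> 0 <= ths <= PI / 3 ->
  triplet ds ths Qi Qj Qk -> U <> Qi -> U <> Qj -> U <> Qk ->
  edist U Qi <= r -> edist U Qj <= r -> edist U Qk <= r ->
  let ph := 2 * atan (ds / (2 * r) * tan (ths / 2)) in
  Rabs (cosv (sub Qi U) (sub Qj U)) <= cos ph \/
  Rabs (cosv (sub Qi U) (sub Qk U)) <= cos ph \/
  Rabs (cosv (sub Qj U) (sub Qk U)) <= cos ph.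
Proof.
  intros Hr Hds Hth (HNC & Eij & Eik & Ejk & AngI & AngJ & AngK) Hi Hj Hk Di Dj Dk ph.
  pose proof PI_RGT_0.
  destruct (half_angle_constants r ds ths Hr Hds Hth)
    as (HK & HKcp & Hcp & N1 & N2 & Hk0 & Eds & _).
  destruct (noncollinear_neq _ _ _ HNC) as (Nij & Nik & Njk).
  assert (Hth' : 0 <= ths <= PI) by lra.
  pose proof (not_near_of_angle_ge _ _ _ _ (not_eq_sym Nij) (not_eq_sym Nik) Hth' AngI) as HA.
  pose proof (not_near_of_angle_ge _ _ _ _ Nij (not_eq_sym Njk) Hth' AngJ) as HB.
  pose proof (not_near_of_angle_ge _ _ _ _ Nik Njk Hth' AngK) as HC.
  rewrite <- (sub_sub_shift Qj Qi U), <- (sub_sub_shift Qk Qi U) in HA.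
  rewrite <- (sub_sub_shift Qi Qj U), <- (sub_sub_shift Qk Qj U) in HB.
  rewrite <- (sub_sub_shift Qi Qk U), <- (sub_sub_shift Qj Qk U) in HC.
  apply (exists_pair_cos_le (cos ths) (ds / (2 * r)) r ds); auto using norm_sub_gt0, sub_neq;
    try (apply Rge_le; rewrite !sub_sub_shift; assumption).
  unfold cross, sub; simpl; intro; apply HNC; lra.
Qed.

Theorem theorem1 (r ds ths : R) (Qi Qj Qk U : pt) (thE : R) :
  0 < r ->
  0 <= ds <= 2 * r ->
  0 <= ths <= PI / 3 ->
  triplet ds ths Qi Qj Qk ->
  U <> Qi -> U <> Qj -> U <> Qk ->
  edist U Qi <= r -> edist U Qj <= r -> edist U Qk <= r ->
  is_EVA U Qi Qj Qk thE ->
  (in_triangle U Qi Qj Qk -> Rabs (PI / 2 - thE) <= PI / 2 - ths) /\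
  (~ in_triangle U Qi Qj Qk ->
     Rabs (PI / 2 - thE) <= PI / 2 - 2 * atan (ds / (2 * r) * tan (ths / 2))).
Proof.
  intros Hr Hds Hth Htr Hi Hj Hk Di Dj Dk Heva.
  pose proof PI_RGT_0.
  split; intros Hin.
  - apply (eva_le_of_pair_cos_le U Qi Qj Qk); auto; [lra |].
    exact (inside_pair_abs_cos_le ds ths Qi Qj Qk U Hth Htr Hi Hj Hk Hin).
  (* The outside bound holds for every position of [U]. *)
  - destruct (half_angle_constants r ds ths Hr Hds Hth) as (_ & _ & _ & _ & _ & _ & _ & Hph).
    apply (eva_le_of_pair_cos_le U Qi Qj Qk); auto.
    exact (pair_abs_cos_le_half_angle r ds ths Qi Qj Qk U Hr Hds Hth Htr Hi Hj Hk Di Dj Dk).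
Qed.
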